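(* Let $V$ be a finite-dimensional real vector space, $\phi\in\mathrm{End}(V)\setminus\{0\}$, $W=\mathrm{im}(\phi)$, $\alpha\in V^*$ and $c\in C_{sl}(W)$. Then the Lie quasi-state $\zeta_{\alpha,c}$ on $\mathfrak{g}_\phi$ is invariant under the adjoint group of $\mathfrak{g}_\phi$ if and only if (i) $\mathrm{im}\,\phi\subset\ker\alpha$, and (ii) $c$ is constant on cosets of $\mathrm{im}\,\phi^2$ in $W$, i.e. $c(w+u)=c(w)$ for all $w\in W$, $u\in\mathrm{im}\,\phi^2$ (so $c$ descends to a function on $W/\mathrm{im}\,\phi^2$).
   Context: $\mathfrak{g}_\phi$ is $V\times\mathbb{R}$ with bracket $[(v,s),(w,t)]=(s\phi(w)-t\phi(v),0)$. $C_{sl}(W)$ is the space of continuous functions $c:W\to\mathbb{R}$ with $c(w)/\|w\|\to0$ as $w\to\infty$. $\zeta_{\alpha,c}:\mathfrak{g}_\phi\to\mathbb{R}$ is defined by $\zeta_{\alpha,c}(v,t)=c(\phi(v)/t)\,t+\alpha(v)$ for $t\ne0$ and $\zeta_{\alpha,c}(v,0)=\alpha(v)$; it is a continuous Lie quasi-state (a function linear on every abelian subalgebra). Ad-invariance means $\zeta(\exp(\mathrm{ad}(Y))X)=\zeta(X)$ for all $X,Y\in\mathfrak{g}_\phi$. *)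

From Stdlib Require Import Reals.
From mathcomp Require Import ssreflect ssrfun ssrbool eqtype ssrnat seq fintype bigop.
Set Implicit Arguments.
Unset Strict Implicit.

Open Scope R_scope.

Definition vec (n : nat) := 'I_n -> R.

Definition vadd {n} (v w : vec n) : vec n := fun i => v i + w i.
Definition vscale {n} (a : R) (v : vec n) : vec n := fun i => a * v i.
Definition vsub {n} (v w : vec n) : vec n := fun i => v i - w i.
Definition vzero {n} : vec n := fun _ => 0.

Definition vnorm {n} (v : vec n) : R := sqrt (\big[Rplus/R0]_(i < n) (v i * v i)).

Definition is_linear {n} (f : vec n -> vec n) : Prop :=
  (forall v w, f (vadd v w) = vadd (f v) (f w)) /\
  (forall a v, f (vscale a v) = vscale a (f v)).

Definition is_linear_form {n} (a : vec n -> R) : Prop :=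
  (forall v w, a (vadd v w) = a v + a w) /\
  (forall s v, a (vscale s v) = s * a v).

Definition in_image {n} (phi : vec n -> vec n) (w : vec n) : Prop :=
  exists v, w = phi v.

(* c : W -> R is represented by a function on V; only its values on W = im phi matter.
   C_sl(W): continuous on W and c(w)/||w|| -> 0 as w -> infinity in W. *)
Definition C_sl {n} (phi : vec n -> vec n) (c : vec n -> R) : Prop :=
  (forall w, in_image phi w -> forall eps, eps > 0 -> exists delta, delta > 0 /\
     forall w', in_image phi w' -> vnorm (vsub w' w) < delta -> Rabs (c w' - c w) < eps) /\
  (forall eps, eps > 0 -> exists M, forall w, in_image phi w -> M < vnorm w ->
     Rabs (c w) / vnorm w < eps).

Definition gphi (n : nat) := (vec n * R)%type.

Definition bracket {n} (phi : vec n -> vec n) (X Y : gphi n) : gphi n :=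
  let (v, s) := X in let (w, t) := Y in
  (vsub (vscale s (phi w)) (vscale t (phi v)), 0).

Definition ad {n} (phi : vec n -> vec n) (Y : gphi n) (X : gphi n) : gphi n :=
  bracket phi Y X.

Definition ad_pow {n} (phi : vec n -> vec n) (Y : gphi n) (k : nat) (X : gphi n) : gphi n :=
  Nat.iter k (ad phi Y) X.

Definition exp_ad_is {n} (phi : vec n -> vec n) (Y X Z : gphi n) : Prop :=
  (forall i : 'I_n, infinite_sum (fun k => (fst (ad_pow phi Y k X)) i / INR (Factorial.fact k)) ((fst Z) i)) /\
  infinite_sum (fun k => snd (ad_pow phi Y k X) / INR (Factorial.fact k)) (snd Z).

Definition zeta {n} (phi : vec n -> vec n) (alpha : vec n -> R) (c : vec n -> R)
  (X : gphi n) : R :=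
  let (v, t) := X in
  if Req_EM_T t 0 then alpha v
  else c (vscale (/ t) (phi v)) * t + alpha v.

(* invariance under the adjoint group (generated by the exp(ad Y)) *)
Definition ad_invariant {n} (phi : vec n -> vec n) (f : gphi n -> R) : Prop :=
  forall X Y Z : gphi n, exp_ad_is phi Y X Z -> f Z = f X.

From Stdlib Require Import Reals Lra FunctionalExtensionality.
From mathcomp Require Import ssreflect ssrfun ssrbool eqtype ssrnat seq fintype bigop.
Set Implicit Arguments.
Unset Strict Implicit.
Open Scope R_scope.

(* The bracket takes values in [im phi * 0], so every partial sum of exp (ad Y) (v, t) lies in
   [(v + im phi, t)]; passing to the limit with the continuity of alpha and of c shows that (i)
   and (ii) give invariance.  Conversely, ad (w, 0) is nilpotent of order 2 and exp (ad (w, 0))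
   sends (v, 1) to (v - phi w, 1), so invariance reads c (phi v - phi^2 w) = c (phi v) + alpha (phi w).
   On the ray through phi^2 w this makes c affine with slope -alpha (phi w), which its sublinear
   growth forces to vanish; the same identity then says that c is invariant under im phi^2. *)

Section LinearAlgebra.
Variable n : nat.

Lemma vscale1 (v : vec n) : vscale 1 v = v.
Proof. by apply: functional_extensionality => i; rewrite /vscale Rmult_1_l. Qed.

Lemma vscale0 (v : vec n) : vscale 0 v = vzero.
Proof. by apply: functional_extensionality => i; rewrite /vscale Rmult_0_l. Qed.

Lemma vscale_vzero (a : R) : vscale a (@vzero n) = vzero.
Proof. by apply: functional_extensionality => i; rewrite /vscale /vzero Rmult_0_r. Qed.

Lemma vsubE (v w : vec n) : vsub v w = vadd v (vscale (-1) w).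
Proof. apply: functional_extensionality => i; rewrite /vsub /vadd /vscale; ring. Qed.

Variable phi : vec n -> vec n.
Hypothesis phi_lin : is_linear phi.

Lemma linearD v w : phi (vadd v w) = vadd (phi v) (phi w).
Proof. exact: (proj1 phi_lin). Qed.

Lemma linearZ a v : phi (vscale a v) = vscale a (phi v).
Proof. exact: (proj2 phi_lin). Qed.

Lemma linearB v w : phi (vsub v w) = vsub (phi v) (phi w).
Proof. by rewrite !vsubE linearD linearZ. Qed.

Lemma linear0 : phi vzero = vzero.
Proof. by rewrite -{1}(vscale0 vzero) linearZ vscale0. Qed.

Lemma in_image_scale a w : in_image phi w -> in_image phi (vscale a w).
Proof. by case=> v ->; exists (vscale a v); rewrite linearZ. Qed.

Lemma linear_coord_form (a : R) (j : 'I_n) : is_linear_form (fun v => a * phi v j).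
Proof.
split=> [v w|s v]; [rewrite linearD /vadd | rewrite linearZ /vscale]; ring.
Qed.

Variable alpha : vec n -> R.
Hypothesis alpha_lin : is_linear_form alpha.

Lemma formD v w : alpha (vadd v w) = alpha v + alpha w.
Proof. exact: (proj1 alpha_lin). Qed.

Lemma formZ a v : alpha (vscale a v) = a * alpha v.
Proof. exact: (proj2 alpha_lin). Qed.

Lemma formB v w : alpha (vsub v w) = alpha v - alpha w.
Proof. rewrite vsubE formD formZ; ring. Qed.

Lemma form0 : alpha vzero = 0.
Proof. by rewrite -(vscale0 vzero) formZ Rmult_0_l. Qed.

End LinearAlgebra.

Lemma Un_cv_const (a : R) : Un_cv (fun _ => a) a.
Proof. by move=> e e_pos; exists 0%nat => k _; rewrite Rdist_eq. Qed.

Lemma Un_cv_big_sum (I : Type) (r : seq I) (f : I -> nat -> R) (l : I -> R) :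
  (forall i, Un_cv (f i) (l i)) ->
  Un_cv (fun N => \big[Rplus/0]_(i <- r) f i N) (\big[Rplus/0]_(i <- r) l i).
Proof.
move=> f_cv; elim: r => [|i r IH].
  rewrite big_nil; apply: (Un_cv_ext (fun _ => 0)); last exact: Un_cv_const.
  by move=> N; rewrite big_nil.
rewrite big_cons; apply: (Un_cv_ext (fun N => f i N + \big[Rplus/0]_(j <- r) f j N)).
  by move=> N; rewrite big_cons.
exact: CV_plus.
Qed.

Section Coordinates.
Variable n : nat.

Definition ebase (a : 'I_n) : vec n := fun j => if j == a then 1 else 0.

Definition restrict (r : seq 'I_n) (x : vec n) : vec n :=
  fun j => if j \in r then x j else 0.

Lemma restrict_cons a r x : a \notin r ->
  restrict (a :: r) x = vadd (vscale (x a) (ebase a)) (restrict r x).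
Proof.
move=> a_r; apply: functional_extensionality => j.
rewrite /restrict /vadd /vscale /ebase in_cons.
by case: (j =P a) => [->|_] /=; rewrite ?(negbTE a_r); ring.
Qed.

Lemma linear_form_coordE (g : vec n -> R) (x : vec n) : is_linear_form g ->
  g x = \big[Rplus/0]_(i <- index_enum 'I_n) (x i * g (ebase i)).
Proof.
move=> g_lin.
have restrictE r : uniq r -> g (restrict r x) = \big[Rplus/0]_(i <- r) (x i * g (ebase i)).
  elim: r => [_|a r IH /andP [a_r r_uniq]].
    have -> : restrict [::] x = vzero by apply: functional_extensionality.
    by rewrite big_nil (form0 g_lin).
  by rewrite restrict_cons // (formD g_lin) (formZ g_lin) big_cons IH.
rewrite -restrictE ?index_enum_uniq //; congr g.
by apply: functional_extensionality => j; rewrite /restrict mem_index_enum.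
Qed.

Lemma linear_form_cv (g : vec n -> R) (x : nat -> vec n) (y : vec n) :
  is_linear_form g -> (forall i, Un_cv (fun N => x N i) (y i)) ->
  Un_cv (fun N => g (x N)) (g y).
Proof.
move=> g_lin x_cv; rewrite (linear_form_coordE y g_lin).
apply: (Un_cv_ext (fun N => \big[Rplus/0]_(i <- index_enum 'I_n) (x N i * g (ebase i)))).
  by move=> N; rewrite -linear_form_coordE.
apply: (@Un_cv_big_sum _ _ (fun i N => (x N i * g (ebase i)))) => i.
by apply: CV_mult => //; apply: Un_cv_const.
Qed.

Lemma sum_squares_ge0 (r : seq 'I_n) (u : vec n) :
  0 <= \big[Rplus/0]_(i <- r) (u i * u i).
Proof.
elim: r => [|a r IH]; first by rewrite big_nil; lra.
by rewrite big_cons; have := Rle_0_sqr (u a); rewrite /Rsqr; lra.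
Qed.

Lemma vnorm_ge0 (u : vec n) : 0 <= vnorm u.
Proof. exact: sqrt_pos. Qed.

Lemma vnorm_scale (a : R) (u : vec n) : vnorm (vscale a u) = Rabs a * vnorm u.
Proof.
have sumE r : \big[Rplus/0]_(i <- r) (vscale a u i * vscale a u i)
            = (a * a) * \big[Rplus/0]_(i <- r) (u i * u i).
  by elim: r => [|i r IH]; rewrite ?big_nil ?big_cons ?IH /vscale; ring.
rewrite /vnorm sumE sqrt_mult ?sqrt_Rsqr_abs //; last exact: sum_squares_ge0.
exact: Rle_0_sqr.
Qed.

Lemma vnorm_eq0 (u : vec n) : vnorm u = 0 -> u = vzero.
Proof.
move=> /(sqrt_eq_0 _ (sum_squares_ge0 _ u)) sum0.
have coord0 r : \big[Rplus/0]_(i <- r) (u i * u i) = 0 -> forall i, i \in r -> u i = 0.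
  elim: r => [|a r IH] //; rewrite big_cons => sum_ar i.
  have := sum_squares_ge0 r u; have := Rle_0_sqr (u a); rewrite /Rsqr => ua_ge0 r_ge0.
  rewrite in_cons => /orP [/eqP ->|i_r]; last by apply: IH => //; lra.
  by have /Rmult_integral [] : u a * u a = 0 by lra.
by apply: functional_extensionality => i; apply: (coord0 _ sum0); apply: mem_index_enum.
Qed.

Lemma vnorm_sub_cv (x : nat -> vec n) (y : vec n) :
  (forall i, Un_cv (fun N => x N i) (y i)) ->
  Un_cv (fun N => vnorm (vsub (x N) y)) 0.
Proof.
move=> x_cv; rewrite -sqrt_0; apply: continuity_seq.
  by apply: continuity_pt_sqrt; lra.
have coord_cv i : Un_cv (fun N => vsub (x N) y i * vsub (x N) y i) (0 * 0).
  have sub_cv : Un_cv (fun N => vsub (x N) y i) 0.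
    by rewrite -(Rminus_diag_eq (y i) (y i)) //; apply: CV_minus => //; apply: Un_cv_const.
  exact: CV_mult.
have sum0 (r : seq 'I_n) : \big[Rplus/0]_(i <- r) (0 * 0) = 0.
  by elim: r => [|i r IH]; rewrite ?big_nil ?big_cons ?IH; ring.
by have := Un_cv_big_sum (index_enum 'I_n) coord_cv; rewrite sum0.
Qed.

End Coordinates.

Section Sublinear.
Variables (n : nat) (phi : vec n -> vec n) (c : vec n -> R).
Hypotheses (phi_lin : is_linear phi) (c_sl : C_sl phi c).

Lemma C_sl_cv (x : nat -> vec n) (y : vec n) :
  (forall N, in_image phi (x N)) -> in_image phi y ->
  (forall i, Un_cv (fun N => x N i) (y i)) ->
  Un_cv (fun N => c (x N)) (c y).
Proof.
move=> x_im y_im x_cv e e_pos.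
have [d [d_pos c_cont]] := proj1 c_sl y y_im e e_pos.
have [N xN_close] := vnorm_sub_cv x_cv d_pos.
exists N => k k_ge; apply: c_cont => //.
have := xN_close k k_ge; rewrite /R_dist Rminus_0_r.
exact: Rle_lt_trans (RRle_abs _).
Qed.

Lemma C_sl_affine_ray_slope0 (u : vec n) (a b : R) : in_image phi u ->
  (forall l, c (vscale l u) = b - l * a) -> a = 0.
Proof.
move=> u_im c_ray.
case: (Req_dec (vnorm u) 0) => [/vnorm_eq0 u0|nu_neq0].
  by have := c_ray 0; have := c_ray 1; rewrite u0 !vscale_vzero; lra.
have nu_pos : 0 < vnorm u by have := vnorm_ge0 u; lra.
case: (Req_dec a 0) => // a_neq0.
have a_pos : 0 < Rabs a by apply: Rabs_pos_lt.
have [M c_small] : exists M, forall w, in_image phi w -> M < vnorm w ->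
    Rabs (c w) / vnorm w < Rabs a / (2 * vnorm u).
  by apply: (proj2 c_sl); apply: Rdiv_lt_0_compat; lra.
(* Along the ray c grows like l |a|, which sublinearity caps at l |a| / 2 for large l. *)
have slope_bound l : 0 < l -> M < l * vnorm u -> l * Rabs a < 2 * Rabs b.
  move=> l_pos M_lt; have lu_pos : 0 < l * vnorm u by apply: Rmult_lt_0_compat.
  have := c_small _ (in_image_scale phi_lin l u_im).
  rewrite vnorm_scale Rabs_pos_eq ?c_ray; last lra.
  move=> /(_ M_lt); rewrite (_ : Rabs a / (2 * vnorm u) = l * Rabs a / 2 / (l * vnorm u)).
    move=> /(Rmult_lt_reg_r _ _ _ (Rinv_0_lt_compat _ lu_pos)) small.
    have := Rabs_triang_inv (l * a) b.
    rewrite Rabs_minus_sym Rabs_mult (Rabs_pos_eq l); lra.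
  by field; lra.
set l1 := (Rabs M + 1) / vnorm u; set l2 := 2 * Rabs b / Rabs a.
have l1_pos : 0 < l1 by apply: Rdiv_lt_0_compat => //; have := Rabs_pos M; lra.
have l2_ge0 : 0 <= l2.
  by apply: Rmult_le_pos; [have := Rabs_pos b | apply: Rlt_le; apply: Rinv_0_lt_compat]; lra.
have l1E : l1 * vnorm u = Rabs M + 1 by rewrite /l1; field; lra.
have l2E : l2 * Rabs a = 2 * Rabs b by rewrite /l2; field; lra.
have := slope_bound (l1 + l2); have := RRle_abs M; nra.
Qed.

End Sublinear.

Lemma infinite_sum_two_terms (f : nat -> R) :
  (forall k, f k.+2 = 0) -> infinite_sum f (f 0%nat + f 1%nat).
Proof.
move=> f_tail0.
have partialE N : sum_f_R0 f N.+1 = f 0%nat + f 1%nat.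
  by elim: N => [|N IH] //; rewrite tech5 IH f_tail0 Rplus_0_r.
move=> e e_pos; exists 1%nat => [[|k] k_ge]; first by inversion k_ge.
by rewrite partialE Rdist_eq.
Qed.

Section AdjointExponential.
Variables (n : nat) (phi : vec n -> vec n).

Lemma ad_powS (Y X : gphi n) k : ad_pow phi Y k.+1 X = ad phi Y (ad_pow phi Y k X).
Proof. by []. Qed.

(* [ad (w, 0)] maps everything into [im phi * 0], which it kills. *)
Lemma ad_pow_central_nil (w : vec n) (X : gphi n) k :
  ad_pow phi (w, 0) k.+2 X = (vzero, 0).
Proof.
rewrite !ad_powS; case: (ad_pow phi (w, 0) k X) => v t.
rewrite /ad /bracket; congr pair.
by apply: functional_extensionality => i; rewrite /vsub /vscale /vzero; ring.
Qed.

Lemma exp_ad_central (w v : vec n) (t : R) :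
  exp_ad_is phi (w, 0) (v, t) (vsub v (vscale t (phi w)), t).
Proof.
split=> [i|].
- set f := fun k => fst (ad_pow phi (w, 0) k (v, t)) i / INR (Factorial.fact k).
  have -> : fst (vsub v (vscale t (phi w)), t) i = f 0%nat + f 1%nat.
    by rewrite /f /= /vsub /vscale; field.
  by apply: infinite_sum_two_terms => k; rewrite /f ad_pow_central_nil /vzero /Rdiv Rmult_0_l.
- set f := fun k => snd (ad_pow phi (w, 0) k (v, t)) / INR (Factorial.fact k).
  have -> : snd (vsub v (vscale t (phi w)), t) = f 0%nat + f 1%nat.
    by rewrite /f /=; field.
  by apply: infinite_sum_two_terms => k; rewrite /f ad_pow_central_nil /Rdiv Rmult_0_l.
Qed.

Hypothesis phi_lin : is_linear phi.

Lemma adE (w v : vec n) (s t : R) :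
  ad phi (w, s) (v, t) = (phi (vsub (vscale s v) (vscale t w)), 0).
Proof. by rewrite /ad /bracket /= (linearB phi_lin) !(linearZ phi_lin). Qed.

Lemma ad_powS_image (Y X : gphi n) k : exists u, ad_pow phi Y k.+1 X = (phi u, 0).
Proof.
case: Y => w s; rewrite ad_powS; case: (ad_pow phi (w, s) k X) => v t.
by rewrite adE; eexists.
Qed.

Lemma exp_ad_partial_fst (Y X : gphi n) N : exists q,
  (fun i => sum_f_R0 (fun k => fst (ad_pow phi Y k X) i / INR (Factorial.fact k)) N)
  = vadd (fst X) (phi q).
Proof.
elim: N => [|N [q IH]].
  exists vzero; rewrite (linear0 phi_lin).
  by apply: functional_extensionality => i; rewrite /= /vadd /vzero; field.
have [u ad_u] := ad_powS_image Y X N.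
exists (vadd q (vscale (/ INR (Factorial.fact N.+1)) u)).
apply: functional_extensionality => i.
rewrite tech5 (equal_f IH i) ad_u (linearD phi_lin) (linearZ phi_lin) /vadd /vscale /Rdiv /=; ring.
Qed.

Lemma exp_ad_partial_snd (Y X : gphi n) N :
  sum_f_R0 (fun k => snd (ad_pow phi Y k X) / INR (Factorial.fact k)) N = snd X.
Proof.
elim: N => [|N IH]; first by rewrite /=; field.
have [u ad_u] := ad_powS_image Y X N.
by rewrite tech5 IH ad_u /Rdiv Rmult_0_l Rplus_0_r.
Qed.

Lemma exp_ad_snd (Y X Z : gphi n) : exp_ad_is phi Y X Z -> snd Z = snd X.
Proof.
move=> [_ snd_cv].
apply: (UL_sequence (fun N => sum_f_R0 (fun k => snd (ad_pow phi Y k X) / INR (Factorial.fact k)) N)).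
  exact: snd_cv.
apply: (Un_cv_ext (fun _ => snd X)); last exact: Un_cv_const.
by move=> N; rewrite exp_ad_partial_snd.
Qed.

Lemma exp_ad_fst (Y X Z : gphi n) : exp_ad_is phi Y X Z ->
  exists x : nat -> vec n, (forall N, exists q, x N = vadd (fst X) (phi q)) /\
    (forall i, Un_cv (fun N => x N i) (fst Z i)).
Proof.
move=> [fst_cv _].
exists (fun N i => sum_f_R0 (fun k => fst (ad_pow phi Y k X) i / INR (Factorial.fact k)) N).
by split; [apply: exp_ad_partial_fst | apply: fst_cv].
Qed.

End AdjointExponential.

Section Invariance.
Variables (n : nat) (phi : vec n -> vec n) (alpha : vec n -> R) (c : vec n -> R).
Hypotheses (phi_lin : is_linear phi) (alpha_lin : is_linear_form alpha)
  (c_sl : C_sl phi c).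

Lemma zeta_ad_invariant :
  (forall v, alpha (phi v) = 0) ->
  (forall w u, in_image phi w -> in_image (fun x => phi (phi x)) u -> c (vadd w u) = c w) ->
  ad_invariant phi (zeta phi alpha c).
Proof.
move=> alpha_im c_coset [v t] Y [z t'] exp_Z.
have /= -> := exp_ad_snd phi_lin exp_Z.
have [x [x_coset x_cv]] := exp_ad_fst phi_lin exp_Z.
have alpha_z : alpha z = alpha v.
  apply: (UL_sequence (fun N => alpha (x N))); first exact: linear_form_cv.
  apply: (Un_cv_ext (fun _ => alpha v)); last exact: Un_cv_const.
  by move=> N; have [q ->] := x_coset N; rewrite (formD alpha_lin) alpha_im Rplus_0_r.
rewrite /zeta alpha_z; case: Req_EM_T => // t_neq0; congr (_ * t + _).
set y := vscale (/ t) (phi v).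
apply: (UL_sequence (fun N => c (vscale (/ t) (phi (x N))))).
  apply: (C_sl_cv c_sl) => [N||j].
  - by apply: in_image_scale => //; exists (x N).
  - by apply: in_image_scale => //; exists z.
  - exact: (linear_form_cv (linear_coord_form phi_lin (/ t) j) x_cv).
apply: (Un_cv_ext (fun _ => c y)); last exact: Un_cv_const.
move=> N; have [q ->] := x_coset N.
have -> : vscale (/ t) (phi (vadd v (phi q))) = vadd y (phi (phi (vscale (/ t) q))).
  rewrite !(linearD phi_lin) !(linearZ phi_lin).
  by apply: functional_extensionality => i; rewrite /y /vadd /vscale; ring.
symmetry; apply: c_coset; last by exists (vscale (/ t) q).
by apply: in_image_scale => //; exists v.
Qed.

Hypothesis zeta_inv : ad_invariant phi (zeta phi alpha c).

(* Invariance under [exp (ad (w, 0))], which acts as [(v, 1) |-> (v - phi w, 1)]. *)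
Lemma ad_invariant_zeta_shift v w :
  c (vsub (phi v) (phi (phi w))) = c (phi v) + alpha (phi w).
Proof.
have := zeta_inv (exp_ad_central phi w v 1).
rewrite /zeta; destruct (Req_EM_T 1 0); first lra.
rewrite Rinv_1 !vscale1 (linearB phi_lin) (formB alpha_lin) /=; lra.
Qed.

Lemma ad_invariant_zeta_alpha_im v : alpha (phi v) = 0.
Proof.
apply: (C_sl_affine_ray_slope0 phi_lin c_sl (u := phi (phi v)) (b := c vzero)).
  by exists (phi v).
move=> l; have := ad_invariant_zeta_shift vzero (vscale (- l) v).
rewrite (linear0 phi_lin) !(linearZ phi_lin) (formZ alpha_lin).
have -> : vsub vzero (vscale (- l) (phi (phi v))) = vscale l (phi (phi v)).
  by apply: functional_extensionality => i; rewrite /vsub /vzero /vscale; ring.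
lra.
Qed.

Lemma ad_invariant_zeta_coset w u :
  in_image phi w -> in_image (fun x => phi (phi x)) u -> c (vadd w u) = c w.
Proof.
move=> [v ->] [x ->]; have := ad_invariant_zeta_shift v (vscale (-1) x).
rewrite !(linearZ phi_lin) (formZ alpha_lin) ad_invariant_zeta_alpha_im.
have -> : vsub (phi v) (vscale (-1) (phi (phi x))) = vadd (phi v) (phi (phi x)).
  by apply: functional_extensionality => i; rewrite /vsub /vadd /vscale; ring.
lra.
Qed.

End Invariance.

Theorem mainTheorem11 (n : nat) (phi : vec n -> vec n) (alpha : vec n -> R)
  (c : vec n -> R)
  (Hphi : is_linear phi) (Hphi0 : exists v, phi v <> vzero)
  (Halpha : is_linear_form alpha) (Hc : C_sl phi c) :
  ad_invariant phi (zeta phi alpha c) <->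
  ((forall v, alpha (phi v) = 0) /\
   (forall w u, in_image phi w -> in_image (fun x => phi (phi x)) u ->
      c (vadd w u) = c w)).
Proof.
split=> [inv|[alpha_im c_coset]].
- split; [exact: ad_invariant_zeta_alpha_im Hphi Halpha Hc inv |
          exact: ad_invariant_zeta_coset Hphi Halpha Hc inv].
- exact: zeta_ad_invariant Hphi Halpha Hc alpha_im c_coset.
Qed.
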